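(* Let $\mathfrak g=\mathfrak k+_\rho V$ be the semidirect sum of a finite-dimensional real Lie algebra $\mathfrak k$ and a commutative ideal $V$, where $\rho:\mathfrak k\to\operatorname{End}(V)$ is a representation. Let $f$ be a polynomial on $\mathfrak g^*=\mathfrak k^*\oplus V^*$ such that $$f(M,v)=f(M+L,v)\quad\text{for all } (M,v)\in\mathfrak g^* \text{ and all } L\in\mathrm{St}_{\rho^*}(v)^\perp\subset\mathfrak k^*.$$ Then $f\in\operatorname{Ann}(V)$.
   Context: Elements of $\mathfrak g^*$ are written as pairs $(M,v)$ with $M\in\mathfrak k^*$, $v\in V^*$. $\rho^*:\mathfrak k\to\operatorname{End}(V^* )$ is the dual representation, and $\mathrm{St}_{\rho^*}(v)=\{X\in\mathfrak k\mid\rho^*(X)v=0\}$; $\mathrm{St}_{\rho^*}(v)^\perp=\{L\in\mathfrak k^*\mid\langle L,X\rangle=0\ \forall X\in\mathrm{St}_{\rho^*}(v)\}$. $S(\mathfrak g)$ is the polynomial algebra on $\mathfrak g^*$ with Lie–Poisson bracket $\{f,g\}(x)=\langle x,[df(x),dg(x)]\rangle$, and $\operatorname{Ann}(V)=\{f\in S(\mathfrak g)\mid\{f,\eta\}=0\ \forall\eta\in V\}$. *)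

From HB Require Import structures.
From mathcomp Require Import all_boot all_order all_algebra.
From mathcomp Require Import reals.
From mathcomp Require Import mpoly.
Set Implicit Arguments. Unset Strict Implicit. Unset Printing Implicit Defensive.
Import Order.TTheory GRing.Theory Num.Theory.
Local Open Scope ring_scope.

(* Setting: k = 'cV[R]_n (dual k^* = 'rV[R]_n), V = 'cV[R]_m (dual V^* = 'rV[R]_m),
   pairings <M,X> = (M *m X) 0 0.  The Lie bracket of k is given by structure
   constants c i j l : [e_i, e_j] = \sum_l c i j l e_l; the representation by
   the matrices rho i = rho(e_i), extended linearly. *)

Section LieSemidirect.
Variables (R : realType) (n m : nat).
Variable c : 'I_n -> 'I_n -> 'I_n -> R.
Variable rho : 'I_n -> 'M[R]_m.

Definition kbr (X Y : 'cV[R]_n) : 'cV[R]_n :=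
  \col_l (\sum_i \sum_j X i 0 * Y j 0 * c i j l).

Definition is_lie_algebra : Prop :=
  (forall X Y, kbr X Y = - kbr Y X) /\
  (forall X Y Z, kbr X (kbr Y Z) + kbr Y (kbr Z X) + kbr Z (kbr X Y) = 0).

Definition rhoX (X : 'cV[R]_n) : 'M[R]_m := \sum_i X i 0 *: rho i.

Definition is_representation : Prop :=
  forall X Y, rhoX (kbr X Y) = rhoX X *m rhoX Y - rhoX Y *m rhoX X.

Definition rho_star (X : 'cV[R]_n) (v : 'rV[R]_m) : 'rV[R]_m := - (v *m rhoX X).

Definition St (v : 'rV[R]_m) (X : 'cV[R]_n) : Prop := rho_star X v = 0.

Definition St_perp (v : 'rV[R]_m) (L : 'rV[R]_n) : Prop :=
  forall X, St v X -> (L *m X) 0 0 = 0.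

Definition g := ('cV[R]_n * 'cV[R]_m)%type.
Definition gstar := ('rV[R]_n * 'rV[R]_m)%type.

Definition gbr (a b : g) : g :=
  (kbr a.1 b.1, rhoX a.1 *m b.2 - rhoX b.1 *m a.2).

Definition pairing (x : gstar) (a : g) : R :=
  (x.1 *m a.1) 0 0 + (x.2 *m a.2) 0 0.

(* coordinates of a point of g^*: first n coords on k^*, last m on V^* *)
Definition coords (x : gstar) : 'I_(n + m) -> R :=
  fun i => match split i with inl a => x.1 0 a | inr b => x.2 0 b end.

(* polynomials on g^*, i.e. S(g) *)
Notation Sg := {mpoly R[n + m]}.

Definition ev (f : Sg) (x : gstar) : R := f.@[coords x].

(* differential df(x) in g (identifying g^** = g) *)
Definition dpoly (f : Sg) (x : gstar) : g :=
  (\col_a ev (mderiv (lshift m a) f) x, \col_b ev (mderiv (rshift n b) f) x).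

Definition LP (f h : Sg) (x : gstar) : R :=
  pairing x (gbr (dpoly f x) (dpoly h x)).

(* the element eta of V seen as a (linear) element of S(g) *)
Definition Vpoly (eta : 'cV[R]_m) : Sg := \sum_b eta b 0 *: 'X_(rshift n b).

Definition in_Ann_V (f : Sg) : Prop :=
  forall eta : 'cV[R]_m, forall x : gstar, LP f (Vpoly eta) x = 0.

End LieSemidirect.

From HB Require Import structures.
From mathcomp Require Import all_boot all_order all_algebra.
From mathcomp Require Import reals.
From mathcomp Require Import mpoly.
From mathcomp Require Import ring.
Set Implicit Arguments. Unset Strict Implicit. Unset Printing Implicit Defensive.
Import Order.TTheory GRing.Theory Num.Theory.
Local Open Scope ring_scope.

(** At a point x = (M, v) write A for the k-component of df(x).  Since
    df_eta = (0, eta), the bracket {f, eta}(x) equals <v rho(A), eta>, so it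
    suffices that w := v rho(A) vanishes.  The functional L : X |-> <w, v rho(X)>
    annihilates St(v), hence f is constant on the line t |-> (M + t L, v); the
    derivative of this restriction at t = 0 is L(A) = |w|^2, so w = 0. *)

Section RingInduction.
Variables (R : comNzRingType) (N : nat) (P : {mpoly R[N]} -> Prop).
Hypotheses (P1 : P 1) (PX : forall i, P 'X_i)
  (PZ : forall c p, P p -> P (c *: p))
  (PD : forall p q, P p -> P q -> P (p + q))
  (PM : forall p q, P p -> P q -> P (p * q)).

Lemma mpoly_ring_ind p : P p.
Proof.
have P0 : P 0 by rewrite -(scale0r 1); apply: PZ.
elim/mpolyind: p => // c mon p _ _ Pp; apply: PD => //; apply: PZ.
rewrite mpolyXE_id; apply: big_ind => // i _.
by elim: (mon i) => [|k IHk]; rewrite ?expr0 ?exprS //; apply: PM.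
Qed.

End RingInduction.

Lemma mderivXU_meval (R : comNzRingType) (N : nat) (x : 'I_N -> R) i j :
  ('X_i : {mpoly R[N]})^`M(j).@[x] = (i == j)%:R.
Proof.
rewrite mderivX mnm1E; case: eqP => [<-|_]; last by rewrite scale0r meval0.
by rewrite mulr1n -{1}[U_(i)%MM]add0m addmK mpolyX0 scale1r meval1.
Qed.

Section LineRestriction.
Variables (R : comNzRingType) (N : nat) (z d : 'I_N -> R).

Definition line_poly (p : {mpoly R[N]}) : {poly R} :=
  mmap polyC (fun i => (z i)%:P + d i *: 'X) p.

Definition dir_deriv (p : {mpoly R[N]}) : R := \sum_i d i * p^`M(i).@[z].

Lemma horner_line_poly p t : (line_poly p).[t] = p.@[fun i => z i + t * d i].
Proof.
elim/mpoly_ring_ind: p => [|i|c p IHp|p q IHp IHq|p q IHp IHq].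
- by rewrite /line_poly rmorph1 hornerC meval1.
- rewrite /line_poly mmapX mmap1U mevalXU.
  by rewrite hornerD hornerC hornerZ hornerX mulrC.
- by rewrite /line_poly mmapZ hornerCM mevalZ -IHp.
- by rewrite /line_poly mmapD hornerD mevalD -IHp -IHq.
- by rewrite /line_poly rmorphM hornerM mevalM -IHp -IHq.
Qed.

Lemma line_poly_at0 p : (line_poly p).[0] = p.@[z].
Proof. by rewrite horner_line_poly; apply: meval_eq => i; rewrite mul0r addr0. Qed.

Lemma deriv_line_poly_at0 p : (line_poly p)^`().[0] = dir_deriv p.
Proof.
rewrite /dir_deriv; elim/mpoly_ring_ind: p => [|i|c p IHp|p q IHp IHq|p q IHp IHq].
- rewrite /line_poly rmorph1 -[1]/(1%:P) derivC horner0 big1 // => i _.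
  by rewrite -mpolyC1 mderivC meval0 mulr0.
- rewrite /line_poly mmapX mmap1U.
  rewrite derivD derivC derivZ derivX add0r hornerZ hornerC mulr1.
  rewrite (bigD1 i) //= mderivXU_meval eqxx mulr1 big1 ?addr0 // => j ji.
  by rewrite mderivXU_meval eq_sym (negbTE ji) mulr0.
- rewrite /line_poly mmapZ -[mmap _ _ _]/(line_poly p) derivM derivC mul0r add0r.
  rewrite hornerCM IHp mulr_sumr; apply: eq_bigr => i _.
  by rewrite mderivZ mevalZ mulrCA.
- rewrite /line_poly mmapD derivD hornerD IHp IHq -big_split /=.
  by apply: eq_bigr => i _; rewrite mderivD mevalD mulrDr.
- rewrite /line_poly rmorphM derivM hornerD !hornerM IHp IHq.
  rewrite -!/(line_poly _) !line_poly_at0 mulr_suml mulr_sumr -big_split /=.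
  by apply: eq_bigr => i _; rewrite mderivM mevalD !mevalM; ring.
Qed.

End LineRestriction.

Lemma dir_deriv_eq0 (R : numDomainType) (N : nat) (z d : 'I_N -> R) p :
  (forall t, p.@[fun i => z i + t * d i] = p.@[z]) -> dir_deriv z d p = 0.
Proof.
move=> p_const; rewrite -deriv_line_poly_at0.
suff -> : line_poly z d p = (p.@[z])%:P by rewrite derivC horner0.
apply/eqP; rewrite -subr_eq0; apply/eqP.
set q := _ - _; apply: (@roots_geq_poly_eq0 _ q [seq k%:R | k <- iota 0 (size q)]).
- apply/allP => _ /mapP [k _ ->].
  by rewrite /root hornerD hornerN hornerC horner_line_poly p_const subrr.
- by rewrite map_inj_uniq ?iota_uniq // => a b /eqP; rewrite eqr_nat => /eqP.
- by rewrite size_map size_iota.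
Qed.

Lemma dotmx_self_eq0 (R : realDomainType) (k : nat) (w : 'rV[R]_k) :
  (w *m w^T) 0 0 = 0 -> w = 0.
Proof.
rewrite mxE => /eqP; rewrite psumr_eq0 => [/allP w0|j _]; last first.
  by rewrite mxE -expr2 sqr_ge0.
apply/rowP => j; rewrite mxE; apply/eqP.
by have /implyP := w0 j (mem_index_enum j); rewrite mxE -expr2 sqrf_eq0 => /(_ isT).
Qed.

Section SemidirectSum.
Variables (R : realType) (n m : nat).
Variables (c : 'I_n -> 'I_n -> 'I_n -> R) (rho : 'I_n -> 'M[R]_m).

Lemma coords_lshift (x : gstar R n m) a : coords x (lshift m a) = x.1 0 a.
Proof. by rewrite /coords (unsplitK (inl a)). Qed.

Lemma coords_rshift (x : gstar R n m) b : coords x (rshift n b) = x.2 0 b.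
Proof. by rewrite /coords (unsplitK (inr b)). Qed.

Lemma rhoX0 : rhoX rho 0 = 0.
Proof. by rewrite /rhoX big1 // => i _; rewrite mxE scale0r. Qed.

Lemma kbrx0 X : kbr c X 0 = 0.
Proof.
apply/matrixP => l k; rewrite !mxE big1 // => i _.
by rewrite big1 // => j _; rewrite mxE mulr0 mul0r.
Qed.

Lemma dpoly_Vpoly eta (x : gstar R n m) : dpoly (Vpoly n eta) x = (0, eta).
Proof.
have dV j : ev (mderiv j (Vpoly n eta)) x = \sum_b eta b 0 * (rshift n b == j)%:R.
  rewrite /ev /Vpoly (big_morph _ (mderivD j) (mderiv0 _ j)).
  rewrite (big_morph _ (mevalD _) (meval0 _)); apply: eq_bigr => b _.
  by rewrite mderivZ mevalZ mderivXU_meval.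
congr pair; apply/matrixP => i k; rewrite !mxE dV ?ord1.
  by rewrite big1 // => b _; rewrite eq_rlshift mulr0.
rewrite (bigD1 i) //= eqxx mulr1 big1 ?addr0 // => b /negbTE bi.
by rewrite eq_rshift bi mulr0.
Qed.

Lemma LP_Vpoly f eta (x : gstar R n m) :
  LP c rho f (Vpoly n eta) x = (x.2 *m rhoX rho (dpoly f x).1 *m eta) 0 0.
Proof.
rewrite /LP dpoly_Vpoly /gbr /pairing /= kbrx0 rhoX0.
by rewrite mul0mx subr0 mulmx0 mxE add0r mulmxA.
Qed.

Definition rho_orbit_mx (v : 'rV[R]_m) : 'M[R]_(m, n) :=
  \matrix_(j, i) (v *m rho i) 0 j.

Lemma mul_rho_orbit_mx v X : rho_orbit_mx v *m X = (v *m rhoX rho X)^T.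
Proof.
apply/matrixP => j k; rewrite ord1 [RHS]mxE [LHS]mxE /rhoX mulmx_sumr summxE.
by apply: eq_bigr => i _; rewrite -scalemxAr [RHS]mxE mxE mulrC.
Qed.

Lemma St_perp_orbit v (w : 'rV[R]_m) : St_perp rho v (w *m rho_orbit_mx v).
Proof.
move=> X; rewrite /St /rho_star => /eqP; rewrite oppr_eq0 => /eqP vX0.
by rewrite -mulmxA mul_rho_orbit_mx vX0 trmx0 mulmx0 mxE.
Qed.

Lemma St_perpZ v L t : St_perp rho v L -> St_perp rho v (t *: L).
Proof. by move=> vL X /vL LX0; rewrite -scalemxAl mxE LX0 mulr0. Qed.

Lemma dir_deriv_coords f (x : gstar R n m) (L : 'rV[R]_n) :
  dir_deriv (coords x) (coords (L, 0 : 'rV[R]_m)) f = (L *m (dpoly f x).1) 0 0.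
Proof.
rewrite /dir_deriv big_split_ord /= [X in _ + X]big1 => [|b _]; last first.
  by rewrite coords_rshift mxE mul0r.
by rewrite addr0 mxE; apply: eq_bigr => a _; rewrite coords_lshift [in RHS]mxE.
Qed.

Lemma St_perp_dk_eq0 f M v L :
  (forall L', St_perp rho v L' -> ev f (M, v) = ev f (M + L', v)) ->
  St_perp rho v L -> (L *m (dpoly f (M, v)).1) 0 0 = 0.
Proof.
move=> f_inv vL; rewrite -dir_deriv_coords; apply: dir_deriv_eq0 => t.
rewrite [RHS](f_inv _ (St_perpZ t vL)); apply: meval_eq => i.
by rewrite /coords; case: split => a; rewrite !mxE ?mulr0 ?addr0.
Qed.

Lemma rho_dk_eq0 f M v :
  (forall L, St_perp rho v L -> ev f (M, v) = ev f (M + L, v)) ->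
  v *m rhoX rho (dpoly f (M, v)).1 = 0.
Proof.
move=> f_inv; set w := v *m _; apply: dotmx_self_eq0.
have := St_perp_dk_eq0 f_inv (@St_perp_orbit v w).
by rewrite -mulmxA mul_rho_orbit_mx.
Qed.

End SemidirectSum.

Theorem lemma11 (R : realType) (n m : nat)
  (c : 'I_n -> 'I_n -> 'I_n -> R) (rho : 'I_n -> 'M[R]_m)
  (hlie : is_lie_algebra c) (hrep : is_representation c rho)
  (f : {mpoly R[n + m]})
  (hf : forall (M : 'rV[R]_n) (v : 'rV[R]_m) (L : 'rV[R]_n),
          St_perp rho v L -> ev f (M, v) = ev f (M + L, v)) :
  in_Ann_V c rho f.
Proof.
move=> eta [M v]; rewrite LP_Vpoly /=.
by rewrite rho_dk_eq0 ?mul0mx ?mxE // => L; apply: hf.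
Qed.
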